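(* Let $\mathfrak L$ be a complete lattice, $f:\mathfrak L\to\mathfrak L$ monotone, write $\nu^\alpha$ for $\nu^\alpha f$, let $\phi:\mathcal O\to\mathcal O$ and let $\lambda\in\mathcal O$ be a nonzero limit ordinal. Then $\limsup_{\alpha\to\lambda}\nu^{\phi(\alpha)}=\nu^{\liminf_\lambda\phi}$.
   Context: $\mathcal O$ is the set of ordinals $\le\top_{\mathsf{ord}}$ for a fixed ordinal $\top_{\mathsf{ord}}$ ($=\beth_\omega$), a complete lattice. For $g:\mathcal O\to\mathfrak L$ into a complete lattice: $\liminf_\lambda g=\liminf_{\alpha\to\lambda}g(\alpha)=\sup_{\alpha_0<\lambda}\inf_{\alpha_0\le\alpha<\lambda}g(\alpha)$, $\limsup_{\alpha\to\lambda}g(\alpha)=\inf_{\alpha_0<\lambda}\sup_{\alpha_0\le\alpha<\lambda}g(\alpha)$. For $f:\mathfrak L\to\mathfrak L$ and $g\in\mathfrak L$: $f^0(g)=g$, $f^{\alpha+1}(g)=f(f^\alpha(g))$, $f^\lambda(g)=\limsup_{\alpha\to\lambda}f^\alpha(g)$; $\nu^\alpha f:=f^\alpha(\top)$. *)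

From Stdlib Require Import Classical ClassicalEpsilon.

Record complete_lattice := CompleteLattice {
  cl_car :> Type;
  cl_le : cl_car -> cl_car -> Prop;
  cl_le_refl : forall x, cl_le x x;
  cl_le_trans : forall x y z, cl_le x y -> cl_le y z -> cl_le x z;
  cl_le_antisym : forall x y, cl_le x y -> cl_le y x -> x = y;
  cl_sup : (cl_car -> Prop) -> cl_car;
  cl_sup_ub : forall (A : cl_car -> Prop) x, A x -> cl_le x (cl_sup A);
  cl_sup_least : forall (A : cl_car -> Prop) y,
      (forall x, A x -> cl_le x y) -> cl_le (cl_sup A) y;
  cl_inf : (cl_car -> Prop) -> cl_car;
  cl_inf_lb : forall (A : cl_car -> Prop) x, A x -> cl_le (cl_inf A) x;
  cl_inf_greatest : forall (A : cl_car -> Prop) y,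
      (forall x, A x -> cl_le y x) -> cl_le y (cl_inf A)
}.
Arguments cl_le {c}.
Arguments cl_sup {c}.
Arguments cl_inf {c}.

Definition cl_top (L : complete_lattice) : L := cl_sup (fun _ : L => True).
Definition cl_bot (L : complete_lattice) : L := cl_sup (fun _ : L => False).

Definition cl_lt {L : complete_lattice} (x y : L) : Prop := cl_le x y /\ x <> y.

Definition monotone {L : complete_lattice} (f : L -> L) : Prop :=
  forall x y, cl_le x y -> cl_le (f x) (f y).

(* An initial segment [0, top_ord] of the ordinals: a complete lattice whose
   order is total and well-founded (i.e. a well-order with a largest element).
   Every ordinal top_ord gives one, and every such structure is order-isomorphic
   to [0, top_ord] for a unique ordinal top_ord. *)
Record ordinal_segment := OrdinalSegment {
  os_lat :> complete_lattice;
  os_total : forall x y : os_lat, cl_le x y \/ cl_le y x;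
  os_wf : well_founded (@cl_lt os_lat)
}.

Definition is_succ_of {O : ordinal_segment} (beta alpha : O) : Prop :=
  cl_lt alpha beta /\ forall gamma : O, cl_lt alpha gamma -> cl_le beta gamma.

Definition is_limit {O : ordinal_segment} (lam : O) : Prop :=
  lam <> cl_bot O /\ ~ (exists alpha : O, is_succ_of lam alpha).

Definition supf {O : ordinal_segment} {L : complete_lattice}
  (P : O -> Prop) (g : O -> L) : L :=
  cl_sup (fun y => exists alpha, P alpha /\ y = g alpha).
Definition inff {O : ordinal_segment} {L : complete_lattice}
  (P : O -> Prop) (g : O -> L) : L :=
  cl_inf (fun y => exists alpha, P alpha /\ y = g alpha).

Definition liminf {O : ordinal_segment} {L : complete_lattice}
  (g : O -> L) (lam : O) : L :=
  supf (fun a0 => cl_lt a0 lam)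
    (fun a0 => inff (fun alpha => cl_le a0 alpha /\ cl_lt alpha lam) g).

Definition limsup {O : ordinal_segment} {L : complete_lattice}
  (g : O -> L) (lam : O) : L :=
  inff (fun a0 => cl_lt a0 lam)
    (fun a0 => supf (fun alpha => cl_le a0 alpha /\ cl_lt alpha lam) g).

(* One step of the transfinite recursion:
   f^0 g = g, f^(alpha+1) g = f (f^alpha g),
   f^lam g = limsup_{alpha -> lam} f^alpha g  for lam a (nonzero) limit. *)
Definition iter_step {O : ordinal_segment} {L : complete_lattice}
  (f : L -> L) (g : L) (beta : O) (rec : forall alpha : O, cl_lt alpha beta -> L) : L :=
  match excluded_middle_informative (beta = cl_bot O) with
  | left _ => g
  | right _ =>
    match excluded_middle_informative (exists alpha, is_succ_of beta alpha) with
    | left H =>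
        let (alpha, Ha) := constructive_indefinite_description _ H in
        f (rec alpha (proj1 Ha))
    | right _ =>
        cl_inf (fun y => exists a0, cl_lt a0 beta /\
          y = cl_sup (fun z => exists alpha (h : cl_lt alpha beta),
                         cl_le a0 alpha /\ z = rec alpha h))
    end
  end.

Definition iter_ord {O : ordinal_segment} {L : complete_lattice}
  (f : L -> L) (g : L) : O -> L :=
  Fix (os_wf O) (fun _ => cl_car L) (iter_step f g).

Definition nu {O : ordinal_segment} {L : complete_lattice} (f : L -> L) (alpha : O) : L :=
  iter_ord f (cl_top L) alpha.

From Stdlib Require Import Classical ClassicalEpsilon FunctionalExtensionality
  PropExtensionality.

(* The transfinite iterates nu^alpha form a decreasing chain, so alpha |-> nu^alpha
   is antitone.  Over a nonempty set of ordinals it therefore sends infima to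
   suprema (an infimum of ordinals is attained) and suprema to infima (a supremum
   that is not attained is a limit ordinal, where nu is the infimum of the earlier
   iterates).  Applying the first fact to each tail of phi and the second to the
   family of tail infima turns limsup (nu o phi) into nu (liminf phi). *)

Section LatticeFacts.
Variable L : complete_lattice.

Lemma cl_bot_le (x : L) : cl_le (cl_bot L) x.
Proof. apply cl_sup_least; intros _ []. Qed.

Lemma cl_le_top (x : L) : cl_le x (cl_top L).
Proof. apply cl_sup_ub; exact I. Qed.

Variable I : ordinal_segment.

Lemma supf_ub (P : I -> Prop) (g : I -> L) a : P a -> cl_le (g a) (supf P g).
Proof. intros Pa; apply cl_sup_ub; exists a; auto. Qed.

Lemma supf_least (P : I -> Prop) (g : I -> L) y :
  (forall a, P a -> cl_le (g a) y) -> cl_le (supf P g) y.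
Proof. intros H; apply cl_sup_least; intros _ [a [Pa ->]]; auto. Qed.

Lemma inff_lb (P : I -> Prop) (g : I -> L) a : P a -> cl_le (inff P g) (g a).
Proof. intros Pa; apply cl_inf_lb; exists a; auto. Qed.

Lemma inff_greatest (P : I -> Prop) (g : I -> L) y :
  (forall a, P a -> cl_le y (g a)) -> cl_le y (inff P g).
Proof. intros H; apply cl_inf_greatest; intros _ [a [Pa ->]]; auto. Qed.

Lemma eq_inff (P : I -> Prop) (g h : I -> L) :
  (forall a, P a -> g a = h a) -> inff P g = inff P h.
Proof.
  intros E; apply cl_le_antisym; apply inff_greatest; intros a Pa.
  - rewrite <- E by exact Pa; apply inff_lb, Pa.
  - rewrite E by exact Pa; apply inff_lb, Pa.
Qed.

End LatticeFacts.

Section OrdinalFacts.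
Variable O : ordinal_segment.

Lemma lt_nle (a b : O) : cl_lt a b -> ~ cl_le b a.
Proof. intros [le_ab neq] le_ba; apply neq, cl_le_antisym; auto. Qed.

Lemma nle_lt (a b : O) : ~ cl_le b a -> cl_lt a b.
Proof.
  intros nle; destruct (os_total O a b) as [le_ab | le_ba]; [|contradiction].
  split; [exact le_ab|]; intros ->; apply nle, cl_le_refl.
Qed.

Lemma exists_least (P : O -> Prop) x :
  P x -> exists m, P m /\ forall y, P y -> cl_le m y.
Proof.
  induction x as [x IH] using (well_founded_ind (os_wf O)); intros Px.
  destruct (classic (forall y, P y -> cl_le x y)) as [least | not_least].
  - exists x; auto.
  - apply not_all_ex_not in not_least as [y not_le].
    apply imply_to_and in not_le as [Py not_le].
    exact (IH y (nle_lt _ _ not_le) Py).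
Qed.

Lemma bot_succ_or_limit (x : O) :
  x = cl_bot O \/ (exists p, is_succ_of x p) \/ is_limit x.
Proof.
  destruct (classic (x = cl_bot O)) as [|not_bot]; [auto|].
  destruct (classic (exists p, is_succ_of x p)); [auto|].
  right; right; split; auto.
Qed.

Lemma succ_neq_bot (b a : O) : is_succ_of b a -> b <> cl_bot O.
Proof. intros [lt_ab _] ->; exact (lt_nle _ _ lt_ab (cl_bot_le _ _)). Qed.

Lemma is_succ_of_le (a d b e : O) :
  is_succ_of a d -> is_succ_of b e -> cl_le a b -> cl_le d e.
Proof.
  intros [lt_da _] [_ least_b] le_ab; apply NNPP; intros nle.
  apply (lt_nle _ _ lt_da), cl_le_trans with b; [exact le_ab|].
  exact (least_b d (nle_lt _ _ nle)).
Qed.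

Lemma lt_sup (A : O -> Prop) b :
  cl_lt b (cl_sup A) -> exists a, A a /\ cl_lt b a.
Proof.
  intros lt_b; apply NNPP; intros none; apply (lt_nle _ _ lt_b).
  apply cl_sup_least; intros a Aa; apply NNPP; intros nle.
  apply none; exists a; split; [exact Aa | exact (nle_lt _ _ nle)].
Qed.

Lemma sup_is_limit (A : O -> Prop) x :
  A x -> ~ A (cl_sup A) -> is_limit (cl_sup A).
Proof.
  intros Ax not_attained; split.
  - intros sup_bot; apply not_attained.
    replace (cl_sup A) with x; [exact Ax|].
    apply cl_le_antisym; [apply cl_sup_ub, Ax | rewrite sup_bot; apply cl_bot_le].
  - intros [d [lt_d least]].
    destruct (lt_sup A d lt_d) as [a [Aa lt_da]].
    apply not_attained; replace (cl_sup A) with a; [exact Aa|].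
    apply cl_le_antisym; [apply cl_sup_ub, Aa | exact (least a lt_da)].
Qed.

Lemma bot_lt_limit (lam : O) : is_limit lam -> cl_lt (cl_bot O) lam.
Proof. intros [neq _]; split; [apply cl_bot_le | auto]. Qed.

Lemma inff_attained (P : O -> Prop) (phi : O -> O) x :
  P x -> exists a, P a /\ phi a = inff P phi.
Proof.
  intros Px.
  destruct (exists_least (fun y => exists a, P a /\ y = phi a) (phi x))
    as [m [[a [Pa ->]] least]]; [exists x; auto|].
  exists a; split; [exact Pa|].
  apply cl_le_antisym.
  - apply inff_greatest; intros b Pb; apply least; exists b; auto.
  - apply (inff_lb O O P phi), Pa.
Qed.

End OrdinalFacts.

Section Iterates.
Variables (O : ordinal_segment) (L : complete_lattice) (f : L -> L).

Lemma iter_ordE (g : L) (b : O) :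
  iter_ord f g b = iter_step f g b (fun a _ => iter_ord f g a).
Proof.
  apply (Fix_eq (os_wf O) (fun _ => cl_car L) (iter_step f g)).
  intros x F G FG; replace F with G; [reflexivity|].
  extensionality y; extensionality p; symmetry; apply FG.
Qed.

Lemma nu_bot : nu f (cl_bot O) = cl_top L.
Proof.
  unfold nu; rewrite iter_ordE; unfold iter_step.
  destruct (excluded_middle_informative _) as [|not_bot]; [reflexivity|].
  now contradiction not_bot.
Qed.

Lemma nu_succ (b a : O) : is_succ_of b a -> nu f b = f (nu f a).
Proof.
  intros succ_ba; unfold nu at 1; rewrite iter_ordE; unfold iter_step.
  destruct (excluded_middle_informative _) as [is_bot|_].
  { now contradiction (succ_neq_bot _ _ _ succ_ba). }
  destruct (excluded_middle_informative _) as [has_pred|no_pred].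
  - destruct (constructive_indefinite_description _ has_pred) as [a' succ_ba'].
    replace a' with a; [reflexivity|].
    apply cl_le_antisym; apply (is_succ_of_le O b _ b); auto; apply cl_le_refl.
  - now contradiction no_pred; exists a.
Qed.

Lemma nu_limit (b : O) : is_limit b -> nu f b = limsup (nu f) b.
Proof.
  intros [not_bot no_pred]; unfold nu at 1; rewrite iter_ordE; unfold iter_step.
  destruct (excluded_middle_informative _); [contradiction|].
  destruct (excluded_middle_informative _); [contradiction|].
  assert (tails : forall a0 : O,
    cl_sup (fun z => exists alpha (_ : cl_lt alpha b), cl_le a0 alpha /\ z = nu f alpha)
    = supf (fun alpha => cl_le a0 alpha /\ cl_lt alpha b) (nu f)).
  { intros a0; unfold supf; f_equal; extensionality z.
    apply propositional_extensionality; split.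
    - intros [alpha [lt_alpha [le_alpha ->]]]; exists alpha; auto.
    - intros [alpha [[le_alpha lt_alpha] ->]]; exists alpha, lt_alpha; auto. }
  unfold limsup, inff; f_equal; extensionality y.
  apply propositional_extensionality.
  split; intros [a0 [lt_a0 ->]]; exists a0; split; auto; apply tails.
Qed.

Lemma nu_limit_ge (mu : O) (y : L) :
  is_limit mu -> (forall b, cl_lt b mu -> cl_le y (nu f b)) -> cl_le y (nu f mu).
Proof.
  intros lim_mu below; rewrite (nu_limit mu lim_mu); unfold limsup.
  apply inff_greatest; intros a0 lt_a0.
  apply cl_le_trans with (nu f a0); [auto|].
  apply supf_ub; split; [apply cl_le_refl | exact lt_a0].
Qed.

Hypothesis hf : monotone f.

Lemma nu_antitone (a b : O) : cl_le a b -> cl_le (nu f b) (nu f a).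
Proof.
  revert a; induction b as [b IHb] using (well_founded_ind (os_wf O)).
  intro a; induction a as [a IHa] using (well_founded_ind (os_wf O)); intros le_ab.
  destruct (bot_succ_or_limit O a) as [-> | [[d succ_ad] | lim_a]].
  - rewrite nu_bot; apply cl_le_top.
  - destruct (bot_succ_or_limit O b) as [-> | [[e succ_be] | lim_b]].
    + destruct (succ_neq_bot _ _ _ succ_ad).
      apply cl_le_antisym; [exact le_ab | apply cl_bot_le].
    + rewrite (nu_succ b e succ_be), (nu_succ a d succ_ad).
      apply hf, IHb; [exact (proj1 succ_be)|].
      exact (is_succ_of_le O a d b e succ_ad succ_be le_ab).
    + assert (lt_ab : cl_lt a b).
      { split; [exact le_ab|]; intros <-; apply (proj2 lim_b); exists d; exact succ_ad. }
      rewrite (nu_limit b lim_b).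
      apply cl_le_trans with (supf (fun x => cl_le a x /\ cl_lt x b) (nu f)).
      * exact (inff_lb L O _
                 (fun a0 => supf (fun x => cl_le a0 x /\ cl_lt x b) (nu f)) a lt_ab).
      * apply supf_least; intros x [le_ax lt_xb]; exact (IHb x lt_xb a le_ax).
  - apply nu_limit_ge; [exact lim_a|]; intros a0 lt_a0.
    apply IHa; [exact lt_a0|].
    apply cl_le_trans with a; [exact (proj1 lt_a0) | exact le_ab].
Qed.

Lemma nu_inff (P : O -> Prop) (phi : O -> O) x :
  P x -> supf P (fun a => nu f (phi a)) = nu f (inff P phi).
Proof.
  intros Px; destruct (inff_attained O P phi x Px) as [s [Ps attained]].
  apply cl_le_antisym.
  - apply supf_least; intros a Pa; apply nu_antitone, inff_lb, Pa.
  - rewrite <- attained; apply (supf_ub L O P (fun a => nu f (phi a))), Ps.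
Qed.

Lemma nu_supf (P : O -> Prop) (phi : O -> O) x :
  P x -> inff P (fun a => nu f (phi a)) = nu f (supf P phi).
Proof.
  intros Px; set (A := fun y => exists a, P a /\ y = phi a).
  assert (Ax : A (phi x)) by (exists x; auto).
  apply cl_le_antisym.
  - destruct (classic (A (supf P phi))) as [[a [Pa ->]] | not_attained].
    + apply (inff_lb L O P (fun a => nu f (phi a))), Pa.
    + apply nu_limit_ge; [exact (sup_is_limit O A (phi x) Ax not_attained)|].
      intros b lt_b; destruct (lt_sup O A b lt_b) as [_ [[a [Pa ->]] lt_ba]].
      apply cl_le_trans with (nu f (phi a)).
      * apply (inff_lb L O P (fun a => nu f (phi a))), Pa.
      * apply nu_antitone, lt_ba.
  - apply inff_greatest; intros a Pa; apply nu_antitone, supf_ub, Pa.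
Qed.

End Iterates.

Theorem corollary4p14 (O : ordinal_segment) (L : complete_lattice) (f : L -> L)
  (hf : monotone f) (phi : O -> O) (lam : O) (hlam : is_limit lam) :
  limsup (fun alpha => nu f (phi alpha)) lam = nu f (liminf phi lam).
Proof.
  unfold limsup, liminf.
  set (tail a0 := fun alpha : O => cl_le a0 alpha /\ cl_lt alpha lam).
  rewrite (eq_inff L O _ _ (fun a0 => nu f (inff (tail a0) phi))).
  - exact (nu_supf O L f hf (fun a0 => cl_lt a0 lam) _ _ (bot_lt_limit O lam hlam)).
  - intros a0 lt_a0; apply (nu_inff O L f hf _ phi a0).
    split; [apply cl_le_refl | exact lt_a0].
Qed.
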